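(* The pencils in $\mathcal G$ are exactly those subsets of $\mathcal G$ with more than one element that are intersections of two distinct maximal adjacency cliques of $\mathcal G$.
   Context: $K$ is a (not necessarily commutative) field and $V$ is a left vector space over $K$ of arbitrary (possibly infinite) dimension with $\dim V>2$. $\mathcal G:=\{X\le V\mid X\cong V/X\}$, assumed nonempty. Two elements $X,Y\in\mathcal G$ are adjacent if $\dim((X+Y)/X)=\dim((X+Y)/Y)=1$. A maximal adjacency clique is a subset of $\mathcal G$ of mutually adjacent elements which is maximal with respect to inclusion among such subsets. A pencil is a set $\mathcal G[M,N]:=\{X\in\mathcal G\mid M<X<N\}$ (strict inclusions), where $M,N\le V$ are subspaces such that there exists $X\in\mathcal G$ with $M\le X\le N$ and $\dim(X/M)=\dim(N/X)=1$. *)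

From HB Require Import structures.
From mathcomp Require Import all_boot all_order all_algebra.
From mathcomp Require Import boolp classical_sets.
Set Implicit Arguments. Unset Strict Implicit. Unset Printing Implicit Defensive.
Import GRing.Theory.
Local Open Scope ring_scope.
Local Open Scope classical_set_scope.

(* A (not necessarily commutative) field = division ring: a unit ring
   (1 != 0 is built in) in which every nonzero element is a unit. *)
Definition is_division_ring (K : unitRingType) : Prop :=
  forall x : K, x != 0 -> x \is a GRing.unit.

Section Grassmann.
Variables (K : unitRingType) (V : lmodType K).

Definition is_subspace (X : set V) : Prop :=
  X 0 /\ (forall x y, X x -> X y -> X (x + y)) /\
  (forall (a : K) x, X x -> X (a *: x)).

Definition ssum (X Y : set V) : set V :=
  [set z | exists x y, X x /\ Y y /\ z = x + y].

Definition line (v : V) : set V := [set z | exists a : K, z = a *: v].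

Definition codim1 (X Z : set V) : Prop :=
  X `<=` Z /\ exists v, Z v /\ ~ X v /\ Z = ssum X (line v).

Definition dim_gt2 : Prop :=
  exists u v w : V, forall a b c : K, a *: u + b *: v + c *: w = 0 ->
    a = 0 /\ b = 0 /\ c = 0.

(* X ~= V / X : there is a linear map V -> V with image X and kernel X
   (first isomorphism theorem: V/ker f ~= im f). *)
Definition iso_quot (X : set V) : Prop :=
  exists f : {linear V -> V},
    range f = X /\ [set v | f v = 0] = X.

Definition Gset : set (set V) := [set X | is_subspace X /\ iso_quot X].

Definition adjacent (X Y : set V) : Prop :=
  codim1 X (ssum X Y) /\ codim1 Y (ssum X Y).

Definition is_clique (C : set (set V)) : Prop :=
  C `<=` Gset /\ forall X Y, C X -> C Y -> X <> Y -> adjacent X Y.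

Definition is_max_clique (C : set (set V)) : Prop :=
  is_clique C /\ forall D, is_clique D -> C `<=` D -> D = C.

Definition pencil_of (M N : set V) : set (set V) :=
  [set X | Gset X /\ M `<` X /\ X `<` N].

Definition is_pencil (P : set (set V)) : Prop :=
  exists M N : set V, is_subspace M /\ is_subspace N /\
    (exists X, Gset X /\ codim1 M X /\ codim1 X N) /\
    P = pencil_of M N.

End Grassmann.

From HB Require Import structures.
From mathcomp Require Import all_boot all_order all_algebra.
From mathcomp Require Import boolp classical_sets.
Set Implicit Arguments. Unset Strict Implicit. Unset Printing Implicit Defensive.
Import GRing.Theory.
Local Open Scope ring_scope.
Local Open Scope classical_set_scope.

(* For adjacent X <> Y in G, every adjacency clique through X and Y lies in the star
   of X `&` Y (the elements of G covering it) or in the top of X + Y (the elements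
   of G it covers): three pairwise adjacent elements either share X `&` Y or lie in
   X + Y.  Hence a maximal clique through X and Y is that star or that top, and
   the intersection of the two is the pencil G[X `&` Y, X + Y].
   Conversely, for a pencil G[M, N] the star of M and the top of N are maximal and
   distinct since dim V > 2 provides elements of G in one but not the other.  That
   these are in G comes from a shear v |-> v + lam v *: w fixing a common hyperplane
   S of two codimension-one extensions of S: it maps one onto the other and, being
   a linear automorphism, preserves the condition X ~= V / X. *)

Section Grassmann.
Variables (K : unitRingType) (V : lmodType K).
Hypothesis HK : is_division_ring K.
Implicit Types (M N S W X Y Z : set V) (u v w x y z : V) (a b : K).

Lemma subspace0 X : is_subspace X -> X 0. Proof. by case. Qed.

Lemma subspaceD X x y : is_subspace X -> X x -> X y -> X (x + y).
Proof. by case=> _ [+ _]; apply. Qed.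

Lemma subspaceZ X a x : is_subspace X -> X x -> X (a *: x).
Proof. by case=> _ [_ +]; apply. Qed.

Lemma subspaceN X x : is_subspace X -> X x -> X (- x).
Proof. by move=> hX hx; rewrite -scaleN1r; apply: subspaceZ. Qed.

Lemma subspaceB X x y : is_subspace X -> X x -> X y -> X (x - y).
Proof. by move=> hX hx hy; apply: subspaceD => //; apply: subspaceN. Qed.

Lemma setI_subspace X Y : is_subspace X -> is_subspace Y -> is_subspace (X `&` Y).
Proof.
move=> hX hY; split; first by split; apply: subspace0.
by split=> [x y [? ?] [? ?]|a x [? ?]]; split; apply: subspaceD || apply: subspaceZ.
Qed.

Lemma line_subspace v : is_subspace (line v).
Proof.
split; first by exists 0; rewrite scale0r.
split=> [_ _ [a ->] [b ->]|c _ [a ->]]; first by exists (a + b); rewrite scalerDl.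
by exists (c * a); rewrite scalerA.
Qed.

Lemma ssum_subspace X Y : is_subspace X -> is_subspace Y -> is_subspace (ssum X Y).
Proof.
move=> hX hY; split; first by exists 0, 0; rewrite addr0; do !split; apply: subspace0.
split=> [_ _ [x1 [y1 [? [? ->]]]] [x2 [y2 [? [? ->]]]]|a _ [x [y [? [? ->]]]]].
  by exists (x1 + x2), (y1 + y2); rewrite addrACA; do !split; apply: subspaceD.
by exists (a *: x), (a *: y); rewrite scalerDr; do !split; apply: subspaceZ.
Qed.

Lemma ssumC X Y : ssum X Y = ssum Y X.
Proof. by apply/seteqP; split=> _ [x [y [hx [hy ->]]]]; exists y, x; rewrite addrC. Qed.

Lemma ssum_subl X Y : is_subspace Y -> X `<=` ssum X Y.
Proof. by move=> hY x hx; exists x, 0; rewrite addr0; do !split=> //; exact: subspace0. Qed.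

Lemma ssum_subr X Y : is_subspace X -> Y `<=` ssum X Y.
Proof. by move=> hX y hy; exists 0, y; rewrite add0r; do !split=> //; exact: subspace0. Qed.

Lemma ssum_least X Y Z : is_subspace Z -> X `<=` Z -> Y `<=` Z -> ssum X Y `<=` Z.
Proof.
by move=> hZ sXZ sYZ _ [x [y [hx [hy ->]]]]; exact: (subspaceD hZ (sXZ _ hx) (sYZ _ hy)).
Qed.

Lemma line_self v : line v v. Proof. by exists 1; rewrite scale1r. Qed.

Lemma line_least Z v : is_subspace Z -> Z v -> line v `<=` Z.
Proof. by move=> hZ hv _ [a ->]; apply: subspaceZ. Qed.

Lemma extP X v z : ssum X (line v) z <-> exists x a, X x /\ z = x + a *: v.
Proof.
split=> [[x [_ [hx [[a ->] ->]]]]|[x [a [hx ->]]]]; first by exists x, a.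
by exists x, (a *: v); split=> //; split; first exists a.
Qed.

Lemma ext_subspace X v : is_subspace X -> is_subspace (ssum X (line v)).
Proof. by move=> hX; apply: (ssum_subspace hX (line_subspace v)). Qed.

Lemma ext_subl X v : X `<=` ssum X (line v).
Proof. exact/ssum_subl/line_subspace. Qed.

Lemma ext_self X v : is_subspace X -> ssum X (line v) v.
Proof. by move=> hX; apply: (ssum_subr hX (line_self v)). Qed.

Lemma ext_least X Z v : is_subspace Z -> X `<=` Z -> Z v -> ssum X (line v) `<=` Z.
Proof. by move=> hZ sXZ hv; apply: (ssum_least hZ sXZ (line_least hZ hv)). Qed.

Lemma scale_notin_eq0 X a x : is_subspace X -> ~ X x -> X (a *: x) -> a = 0.
Proof.
move=> hX nx hax; apply: contra_notP nx => /eqP a0.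
by rewrite -[x]scale1r -(mulVr (HK a0)) -scalerA; apply: subspaceZ.
Qed.

Lemma ext_exchange S v w : is_subspace S ->
  ssum S (line v) w -> ~ S w -> ssum S (line w) = ssum S (line v).
Proof.
move=> hS hw nw; have /extP[s [a [hs ew]]] := hw.
have a0 : a != 0 by apply: contra_notN nw => /eqP a0; rewrite ew a0 scale0r addr0.
apply/seteqP; split; first exact: (ext_least (ext_subspace v hS) (ext_subl v) hw).
apply: (ext_least (ext_subspace w hS) (ext_subl w)); apply/extP.
exists (- (a^-1 *: s)), a^-1; split; first by apply: (subspaceN hS); apply: subspaceZ.
by rewrite ew scalerDr scalerA (mulVr (HK a0)) scale1r addKr.
Qed.

Lemma codim1_subset X Z : codim1 X Z -> X `<=` Z. Proof. by case. Qed.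

Lemma codim1_neq X Z : codim1 X Z -> X <> Z.
Proof. by move=> [_ [v [hv [nv _]]]] eXZ; apply: nv; rewrite eXZ. Qed.

Lemma codim1_proper X Z : codim1 X Z -> X `<` Z.
Proof.
move=> cXZ; split=> [|sZX]; first exact: codim1_subset.
apply: (codim1_neq cXZ); apply/seteqP; split=> //; exact: codim1_subset.
Qed.

Lemma codim1_subspace X Z : is_subspace X -> codim1 X Z -> is_subspace Z.
Proof. by move=> hX [_ [v [_ [_ ->]]]]; apply: ext_subspace. Qed.

Lemma codim1_ext X v : is_subspace X -> ~ X v -> codim1 X (ssum X (line v)).
Proof. by move=> hX nv; split; [exact: ext_subl|exists v; split; first exact: ext_self]. Qed.

Lemma codim1_exchange X Z w : is_subspace X -> codim1 X Z -> Z w -> ~ X w ->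
  Z = ssum X (line w).
Proof. by move=> hX [_ [v [_ [_ ->]]]] hw nw; rewrite (ext_exchange hX hw nw). Qed.

Lemma codim1_between M X Y : is_subspace M -> is_subspace X -> codim1 M Y ->
  M `<=` X -> X `<=` Y -> X = M \/ X = Y.
Proof.
move=> hM hX cMY sMX sXY; have [sXM|/nonsubset[x [hx nMx]]] := pselect (X `<=` M).
  by left; apply/seteqP.
right; apply/seteqP; split=> //.
by rewrite (codim1_exchange hM cMY (sXY _ hx) nMx); apply: ext_least.
Qed.

Lemma ext_modular X Z x : is_subspace X -> is_subspace Z -> Z x ->
  Z `<=` ssum X (line x) -> Z = ssum (Z `&` X) (line x).
Proof.
move=> hX hZ hx sZ; apply/seteqP; split; last exact: ext_least.
move=> z hz; have /extP[y [a [hy ez]]] := sZ z hz; apply/extP; exists y, a.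
split=> //; split=> //.
have -> : y = z - a *: x by rewrite ez addrK.
by apply: subspaceB => //; apply: subspaceZ.
Qed.

Lemma codim1_common_sup X Y Z : is_subspace X -> is_subspace Y ->
  codim1 X Z -> codim1 Y Z -> X <> Y -> codim1 (X `&` Y) X /\ ssum X Y = Z.
Proof.
move=> hX hY cXZ cYZ nXY; have hZ := codim1_subspace hX cXZ.
have /nonsubset[x [hx nYx]] : ~ X `<=` Y.
  move=> sXY; have [eYX|eYZ] := codim1_between hX hY cXZ sXY (codim1_subset cYZ).
    exact: nXY.
  exact: codim1_neq cYZ eYZ.
have eZ := codim1_exchange hY cYZ (codim1_subset cXZ hx) nYx.
split.
  have sXZ : X `<=` ssum Y (line x) by rewrite -eZ; apply: codim1_subset.
  rewrite [X in codim1 _ X](ext_modular hY hX hx sXZ).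
  by apply: codim1_ext; [exact: setI_subspace|case].
have [eXYY|//] := codim1_between hY (ssum_subspace hX hY) cYZ (ssum_subr hX)
  (ssum_least hZ (codim1_subset cXZ) (codim1_subset cYZ)).
by case: nYx; rewrite -eXYY; apply: ssum_subl.
Qed.

Lemma codim1_common_sub M X Y : is_subspace M ->
  codim1 M X -> codim1 M Y -> X <> Y -> codim1 X (ssum X Y) /\ X `&` Y = M.
Proof.
move=> hM cMX cMY nXY.
have hX := codim1_subspace hM cMX; have hY := codim1_subspace hM cMY.
have /nonsubset[y [hy nXy]] : ~ Y `<=` X.
  move=> sYX; have [eYM|eYX] := codim1_between hM hY cMX (codim1_subset cMY) sYX.
    exact: codim1_neq cMY (esym eYM).
  exact: nXY (esym eYX).
have nMy : ~ M y by move/(codim1_subset cMX).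
have eY := codim1_exchange hM cMY hy nMy.
split.
  suff -> : ssum X Y = ssum X (line y) by apply: codim1_ext.
  have hXy := ext_subspace y hX; apply/seteqP; split.
    apply: (ssum_least hXy (ext_subl y)); rewrite eY.
    apply: (ext_least hXy _ (ext_self y hX)) => m /(codim1_subset cMX).
    exact: ext_subl.
  exact: (ext_least (ssum_subspace hX hY) (ssum_subl hY) (ssum_subr hX hy)).
have sMXY : M `<=` X `&` Y by rewrite subsetI; split; apply: codim1_subset.
have [//|eXYY] := codim1_between hM (setI_subspace hX hY) cMY sMXY (@subIsetr _ X Y).
by case: nXy; move: hy; rewrite -eXYY => -[].
Qed.

Lemma pencil_codim1 M X N Z : is_subspace M -> is_subspace Z ->
  codim1 M X -> codim1 X N -> M `<` Z -> Z `<` N -> codim1 M Z /\ codim1 Z N.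
Proof.
move=> hM hZ cMX cXN [sMZ nZM] [sZN nNZ]; have hX := codim1_subspace hM cMX.
have [->|nZX] := pselect (Z = X); first by [].
have /nonsubset[x [hx nXx]] : ~ Z `<=` X.
  move=> sZX; have [eZM|//] := codim1_between hM hZ cMX sMZ sZX.
  by apply: nZM; rewrite eZM.
have sXZN : forall W, X `<=` W -> W `<=` N -> W <> X -> is_subspace W -> W = N.
  by move=> W sXW sWN nWX hW; case: (codim1_between hX hW cXN sXW sWN).
have eZX : Z `&` X = M.
  have sMZX : M `<=` Z `&` X by rewrite subsetI; split=> //; apply: codim1_subset.
  have [//|eX] := codim1_between hM (setI_subspace hZ hX) cMX sMZX (@subIsetr _ Z X).
  have sXZ : X `<=` Z by rewrite -eX; apply: subIsetl.
  by case: nNZ; rewrite (sXZN Z) // => e; apply: nZX.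
have cMZ : codim1 M Z.
  have sZ : Z `<=` ssum X (line x) by rewrite -(codim1_exchange hX cXN (sZN _ hx) nXx).
  rewrite [X in codim1 _ X](ext_modular hX hZ hx sZ) eZX.
  by apply: codim1_ext => // /(codim1_subset cMX).
split=> //; have [cZ _] := codim1_common_sub hM cMZ cMX nZX.
rewrite -(sXZN (ssum Z X)) //; first exact: ssum_subr.
- exact: ssum_least (codim1_subspace hX cXN) sZN (codim1_subset cXN).
- by move=> eZXX; apply: nXx; rewrite -eZXX; apply: ssum_subl.
- exact: ssum_subspace.
Qed.

Lemma adjacentC X Y : adjacent X Y -> adjacent Y X.
Proof. by rewrite /adjacent ssumC => -[]. Qed.

Lemma adjacent_not_subset X Y : is_subspace X -> is_subspace Y ->
  adjacent X Y -> ~ X `<=` Y.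
Proof.
move=> hX hY [_ cY] sXY; apply: (codim1_neq cY).
by apply/seteqP; split; [apply: ssum_subr|apply: ssum_least].
Qed.

Lemma adjacent_neq X Y : is_subspace X -> is_subspace Y -> adjacent X Y -> X <> Y.
Proof. by move=> hX hY aXY eXY; apply: (adjacent_not_subset hX hY aXY); rewrite eXY. Qed.

Lemma adjacent_meet X Y : is_subspace X -> is_subspace Y -> adjacent X Y ->
  codim1 (X `&` Y) X /\ codim1 (X `&` Y) Y.
Proof.
move=> hX hY aXY; have nXY := adjacent_neq hX hY aXY.
have [cX cY] := aXY.
split; first exact: (codim1_common_sup hX hY cX cY nXY).1.
by rewrite setIC; apply: (codim1_common_sup hY hX cY cX (nesym nXY)).1.
Qed.

Lemma adjacent_of_common_sub M X Y : is_subspace M ->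
  codim1 M X -> codim1 M Y -> X <> Y -> adjacent X Y.
Proof.
move=> hM cMX cMY nXY; split; first exact: (codim1_common_sub hM cMX cMY nXY).1.
by rewrite ssumC; apply: (codim1_common_sub hM cMY cMX (nesym nXY)).1.
Qed.

Lemma adjacent_of_common_sup N X Y : is_subspace X -> is_subspace Y ->
  codim1 X N -> codim1 Y N -> X <> Y -> adjacent X Y.
Proof.
by move=> hX hY cX cY nXY; have [_ eN] := codim1_common_sup hX hY cX cY nXY; split; rewrite eN.
Qed.

Section Adjacent.
Variables X Y : set V.
Hypotheses (hX : is_subspace X) (hY : is_subspace Y) (aXY : adjacent X Y).

Lemma adjacent_meet_eq Z : is_subspace Z -> adjacent X Z ->
  X `&` Y `<=` Z -> Z `&` X = X `&` Y.
Proof.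
move=> hZ aXZ sMZ; have [cMX _] := adjacent_meet hX hY aXY.
have sMZX : X `&` Y `<=` Z `&` X by rewrite subsetI; split=> // v [].
have [//|eZX] := codim1_between (setI_subspace hX hY) (setI_subspace hZ hX) cMX sMZX
  (@subIsetr _ Z X).
by case: (adjacent_not_subset hX hZ aXZ); rewrite -eZX; apply: subIsetl.
Qed.

Lemma adjacent_join_eq Z : is_subspace Z -> adjacent X Z ->
  Z `<=` ssum X Y -> ssum X Z = ssum X Y.
Proof.
move=> hZ aXZ sZN; have hN := ssum_subspace hX hY.
have [eXZ|//] := codim1_between hX (ssum_subspace hX hZ) aXY.1 (ssum_subl hZ)
  (ssum_least hN (ssum_subl hY) sZN).
by case: (adjacent_not_subset hZ hX (adjacentC aXZ)); rewrite -eXZ; apply: ssum_subr.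
Qed.

Lemma adjacent_triangle Z : is_subspace Z -> adjacent X Z -> adjacent Y Z ->
  X `&` Y `<=` Z \/ Z `<=` ssum X Y.
Proof.
move=> hZ aXZ aYZ; have [sMZ|nMZ] := pselect (X `&` Y `<=` Z); [by left|right].
have [_ cMY] := adjacent_meet hX hY aXY.
have [_ cZYY] := adjacent_meet hZ hY (adjacentC aYZ).
have nMZY : X `&` Y <> Z `&` Y by move=> eM; apply: nMZ; rewrite eM; apply: subIsetl.
have [_ eY] := codim1_common_sup (setI_subspace hX hY) (setI_subspace hZ hY) cMY cZYY nMZY.
have hXZ := ssum_subspace hX hZ.
have sNXZ : ssum X Y `<=` ssum X Z.
  apply: (ssum_least hXZ (ssum_subl hZ)); rewrite -eY.
  by apply: (ssum_least hXZ) => v [hv _]; [apply: ssum_subl|apply: ssum_subr].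
have [eNX|->] := codim1_between hX (ssum_subspace hX hY) aXZ.1 (ssum_subl hY) sNXZ.
  by case: (codim1_neq aXY.1).
exact: ssum_subr.
Qed.

End Adjacent.

Lemma adjacent_mixed_join X Y Z1 Z2 : is_subspace X -> is_subspace Y ->
  is_subspace Z1 -> is_subspace Z2 -> adjacent X Y -> adjacent X Z1 ->
  adjacent X Z2 -> adjacent Z1 Z2 -> Z1 `<=` ssum X Y -> ~ X `&` Y `<=` Z1 ->
  X `&` Y `<=` Z2 -> Z2 `<=` ssum X Y.
Proof.
move=> hX hY hZ1 hZ2 aXY aXZ1 aXZ2 aZ12 sZ1N nMZ1 sMZ2.
have [sXZ1Z2|] := adjacent_triangle hX hZ1 aXZ1 hZ2 aXZ2 aZ12; last first.
  by rewrite (adjacent_join_eq hX hY aXY hZ1 aXZ1 sZ1N).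
have [cXZ1 _] := adjacent_meet hX hZ1 aXZ1; have [cMX _] := adjacent_meet hX hY aXY.
have sXZ1M : X `&` Z1 `<=` X `&` Y.
  rewrite -(adjacent_meet_eq hX hY aXY hZ2 aXZ2 sMZ2) subsetI.
  by split=> // v [].
have [eM|eMX] := codim1_between (setI_subspace hX hZ1) (setI_subspace hX hY) cXZ1
  sXZ1M (@subIsetl _ X Y).
  by case: nMZ1; rewrite eM; apply: subIsetr.
by case: (codim1_neq cMX).
Qed.

Definition star M : set (set V) := [set Z | Gset Z /\ codim1 M Z].
Definition top N : set (set V) := [set Z | Gset Z /\ codim1 Z N].

Lemma star_clique M : is_subspace M -> is_clique (star M).
Proof.
move=> hM; split=> [Z [] //|X Y [_ cX] [_ cY] nXY].
exact: adjacent_of_common_sub hM cX cY nXY.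
Qed.

Lemma top_clique N : is_clique (top N).
Proof.
split=> [Z [] //|X Y [[hX _] cX] [[hY _] cY] nXY].
exact: adjacent_of_common_sup hX hY cX cY nXY.
Qed.

Lemma clique_sub_star_or_top D X Y : is_clique D -> D X -> D Y -> X <> Y ->
  D `<=` star (X `&` Y) \/ D `<=` top (ssum X Y).
Proof.
move=> [DG Dadj] DX DY nXY.
have hD Z : D Z -> is_subspace Z by move=> /DG[].
have [hX hY] := (hD _ DX, hD _ DY); have aXY := Dadj _ _ DX DY nXY.
have aX Z : D Z -> Z <> X -> adjacent X Z.
  by move=> DZ nZX; apply: (Dadj _ _ DX DZ (nesym nZX)).
have to_star Z : D Z -> X `&` Y `<=` Z -> star (X `&` Y) Z.
  move=> DZ sMZ; split; first exact: DG.
  have [->|nZX] := pselect (Z = X); first exact: (adjacent_meet hX hY aXY).1.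
  rewrite -(adjacent_meet_eq hX hY aXY (hD _ DZ) (aX _ DZ nZX) sMZ).
  exact: (adjacent_meet (hD _ DZ) hX (adjacentC (aX _ DZ nZX))).1.
have to_top Z : D Z -> Z `<=` ssum X Y -> top (ssum X Y) Z.
  move=> DZ sZN; split; first exact: DG.
  have [->|nZX] := pselect (Z = X); first exact: aXY.1.
  rewrite -(adjacent_join_eq hX hY aXY (hD _ DZ) (aX _ DZ nZX) sZN).
  exact: (aX _ DZ nZX).2.
have star_or_top Z : D Z -> X `&` Y `<=` Z \/ Z `<=` ssum X Y.
  move=> DZ; have [->|nZX] := pselect (Z = X); first by left; apply: subIsetl.
  have [->|nZY] := pselect (Z = Y); first by left; apply: subIsetr.
  exact: (adjacent_triangle hX hY aXY (hD _ DZ) (aX _ DZ nZX) (Dadj _ _ DY DZ (nesym nZY))).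
have [allM|] := pselect (forall Z, D Z -> X `&` Y `<=` Z).
  by left=> Z DZ; apply: (to_star _ DZ (allM _ DZ)).
move=> /existsNP[Z1 /not_implyP[DZ1 nMZ1]]; right=> Z2 DZ2; apply: (to_top _ DZ2).
have sZ1N : Z1 `<=` ssum X Y by case: (star_or_top _ DZ1).
have [//|nZ2N] := pselect (Z2 `<=` ssum X Y).
have sMZ2 : X `&` Y `<=` Z2 by case: (star_or_top _ DZ2).
have nZ1X : Z1 <> X by move=> eZ1; apply: nMZ1; rewrite eZ1; apply: subIsetl.
have nZ2X : Z2 <> X by move=> eZ2; apply: nZ2N; rewrite eZ2; apply: ssum_subl.
have nZ12 : Z1 <> Z2 by move=> eZ; apply: nMZ1; rewrite eZ.
exact: adjacent_mixed_join hX hY (hD _ DZ1) (hD _ DZ2) aXY (aX _ DZ1 nZ1X)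
  (aX _ DZ2 nZ2X) (Dadj _ _ DZ1 DZ2 nZ12) sZ1N nMZ1 sMZ2.
Qed.

Lemma pencil_ofE M X N : is_subspace M -> codim1 M X -> codim1 X N ->
  pencil_of M N = star M `&` top N.
Proof.
move=> hM cMX cXN; apply/seteqP; split=> [Z [GZ [pMZ pZN]]|Z [[GZ cMZ] [_ cZN]]].
  have [cMZ cZN] := pencil_codim1 hM GZ.1 cMX cXN pMZ pZN.
  by split; split.
by split=> //; split; apply: codim1_proper.
Qed.

Lemma max_clique_star_or_top C X Y : is_max_clique C -> C X -> C Y -> X <> Y ->
  C = star (X `&` Y) \/ C = top (ssum X Y).
Proof.
move=> [cC Cmax] CX CY nXY; have [CG _] := cC.
have hM : is_subspace (X `&` Y) by apply: setI_subspace; [case: (CG _ CX)|case: (CG _ CY)].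
have [sC|sC] := clique_sub_star_or_top cC CX CY nXY; [left|right]; apply/esym/Cmax => //.
  exact: star_clique.
exact: top_clique.
Qed.

Lemma bigcup_chain_subspace (F : set (set V)) S0 : total_on F subset -> F S0 ->
  is_subspace S0 -> (forall S z, F S -> S z -> is_subspace S) ->
  is_subspace (\bigcup_(S in F) S).
Proof.
move=> Ftot FS0 hS0 hF; split; first by exists S0 => //; apply: subspace0.
split=> [z1 z2 [S1 FS1 h1] [S2 FS2 h2]|a z [S FS hz]]; last first.
  by exists S => //; apply: subspaceZ (hF _ _ FS hz) hz.
have [s12|s21] := Ftot _ _ FS1 FS2.
  by exists S2 => //; apply: subspaceD (hF _ _ FS2 h2) (s12 _ h1) h2.
by exists S1 => //; apply: subspaceD (hF _ _ FS1 h1) h1 (s21 _ h2).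
Qed.

Lemma max_subspace_avoiding W x : is_subspace W -> ~ W x -> exists A,
  [/\ is_subspace A, W `<=` A, ~ A x & forall v, ~ A v -> ssum A (line v) x].
Proof.
move=> hW nWx; pose avoids S := [/\ is_subspace S, W `<=` S & ~ S x].
(* [set0] is admitted so that the union of the empty chain qualifies *)
pose P := [set S | S = set0 \/ avoids S].
have Pavoids S z : P S -> S z -> avoids S by case=> [->|].
have [A [PA Amax]] : exists A, P A /\ forall B, A `<` B -> ~ P B.
  apply: Zorn_bigcup => F FP Ftot.
  have [[S0 FS0 [z0 hz0]]|nF] := pselect (exists2 S, F S & S !=set0); last first.
    left; apply/seteqP; split=> // z [S FS hz]; apply: nF.
    by exists S => //; exists z.
  have [hS0 sWS0 _] := Pavoids _ _ (FP _ FS0) hz0.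
  right; split.
  - apply: (bigcup_chain_subspace Ftot FS0 hS0) => S z FS hz.
    by case: (Pavoids _ _ (FP _ FS) hz).
  - by move=> w hw; exists S0 => //; apply: sWS0.
  - by move=> [S FS hx]; case: (Pavoids _ _ (FP _ FS) hx).
have [hA sWA nAx] : avoids A.
  case: PA => [eA|//]; exfalso; apply: (Amax W); last by right; split.
  by rewrite eA; split=> // /(_ 0 (subspace0 hW)).
exists A; split=> // v nAv; apply: contrapT => nx.
apply: (Amax (ssum A (line v))).
  by split; [apply: ext_subl|move=> /(_ v (ext_self v hA))].
by right; split=> //; [exact: ext_subspace|exact: (subset_trans sWA (ext_subl v))].
Qed.

Definition linear_of (U : lmodType K) (f : V -> U) (fL : linear f) : {linear V -> U} :=
  HB.pack f (GRing.isLinear.Build K V U *:%R f fL).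

Lemma exists_linear_form W x : is_subspace W -> ~ W x -> exists lam : {linear V -> K^o},
  (forall w, W w -> lam w = 0) /\ lam x = 1.
Proof.
move=> hW nWx; have [A [hA sWA nAx Amax]] := max_subspace_avoiding hW nWx.
have coord v : exists a, A (v - a *: x).
  have [Av|nAv] := pselect (A v); first by exists 0; rewrite scale0r subr0.
  have /extP[s [a [hs ex]]] := Amax v nAv.
  have a0 : a != 0 by apply: contra_notN nAx => /eqP a0; rewrite ex a0 scale0r addr0.
  exists a^-1; suff -> : v - a^-1 *: x = - (a^-1 *: s) by apply: subspaceN => //; apply: subspaceZ.
  by rewrite ex scalerDr scalerA (mulVr (HK a0)) scale1r opprD addrCA subrr addr0.
have coord_uniq v a b : A (v - a *: x) -> A (v - b *: x) -> a = b.
  move=> ha hb; apply/eqP; rewrite -subr_eq0; apply/eqP/(scale_notin_eq0 hA nAx).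
  have -> : (a - b) *: x = (v - b *: x) - (v - a *: x).
    by rewrite opprB [RHS]addrC addrA addrNK scalerBl.
  exact: subspaceB.
pose lam v := sval (cid (coord v)).
have lamP v : A (v - lam v *: x) := svalP (cid (coord v)).
have lamL : linear (lam : V -> K^o).
  move=> a u v; apply: (coord_uniq (a *: u + v)); first exact: lamP.
  rewrite scalerDl -scalerA opprD addrACA -scalerBr.
  by apply: (subspaceD hA); [apply: (subspaceZ _ hA)|]; apply: lamP.
exists (linear_of lamL); split=> [w hw|] /=.
  by apply/esym/(coord_uniq w); rewrite ?scale0r ?subr0; [apply: sWA|apply: lamP].
by apply/esym/(coord_uniq x); rewrite ?scale1r ?subrr; [apply: subspace0|apply: lamP].
Qed.

Lemma linear_formZ (lam : {linear V -> K^o}) a v : lam (a *: v) = a * lam v.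
Proof. exact: linearZ. Qed.

Lemma iso_quot_image (phi psi : {linear V -> V}) X : cancel phi psi -> cancel psi phi ->
  iso_quot X -> iso_quot (phi @` X).
Proof.
move=> phiK psiK [f [rf kf]]; exists (phi \o f \o psi); split.
  apply/seteqP; split=> [_ [v _ <-]|_ [x Xx <-]].
    by exists (f (psi v)) => //; rewrite -rf; exists (psi v).
  by move: Xx; rewrite -rf => -[t _ <-]; exists (phi t) => //=; rewrite phiK.
apply/seteqP; split=> v /=.
  move=> /(congr1 psi); rewrite phiK linear0 => fv0.
  by exists (psi v); [rewrite -kf|rewrite psiK].
by move=> [x Xx <-]; rewrite phiK; move: Xx; rewrite -kf => /= ->; apply: linear0.
Qed.

Section Shear.
Variables (lam : {linear V -> K^o}) (w : V).

Lemma shear_linear : linear (fun v => v + lam v *: w).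
Proof. by move=> a u v; rewrite linearP scalerDl scalerDr -scalerA addrACA. Qed.

Definition shear : {linear V -> V} := linear_of shear_linear.

Lemma shearE v : shear v = v + lam v *: w. Proof. by []. Qed.

Lemma shear_ext_image S y : is_subspace S -> (forall s, S s -> lam s = 0) ->
  lam y = 1 -> shear @` ssum S (line y) = ssum S (line (y + w)).
Proof.
move=> hS lamS lamy; have shearS s a : S s -> shear (s + a *: y) = s + a *: (y + w).
  by move=> hs; rewrite shearE linearD linear_formZ lamS // lamy add0r mulr1 scalerDr addrA.
apply/seteqP; split=> [_ [_ /extP[s [a [hs ->]]] <-]|_ /extP[s [a [hs ->]]]].
  by rewrite shearS //; apply/extP; exists s, a.
by exists (s + a *: y); [apply/extP; exists s, a|rewrite shearS].
Qed.

End Shear.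

Lemma shearK (lam : {linear V -> K^o}) w :
  lam w = 0 -> cancel (shear lam w) (shear lam (- w)).
Proof.
by move=> lamw v; rewrite !shearE linearD linear_formZ lamw mulr0 addr0 scalerN addrK.
Qed.

Lemma Gset_common_hyperplane S Y Z : Gset Y -> is_subspace S ->
  codim1 S Y -> codim1 S Z -> Gset Z.
Proof.
move=> [hY qY] hS cSY cSZ; split; first exact: codim1_subspace hS cSZ.
have [_ [y [hy [nSy eY]]]] := cSY; have [_ [u [hu [nSu eZ]]]] := cSZ.
have [Yu|nYu] := pselect (Y u).
  by rewrite eZ -(codim1_exchange hS cSY Yu nSu).
pose w := u - y.
have nSwy : ~ ssum S (line w) y.
  move=> /extP[s [a [hs ey]]]; have Yau : Y (a *: u).
    have -> : a *: u = y - s + a *: y.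
      by rewrite {1}ey [s + _]addrC addrK -scalerDr subrK.
    apply: (subspaceD hY); last exact: subspaceZ.
    exact: (subspaceB hY hy (codim1_subset cSY hs)).
  by apply: nSy; rewrite ey (scale_notin_eq0 hY nYu Yau) scale0r addr0.
have [lam [lamSw lamy]] := exists_linear_form (ext_subspace w hS) nSwy.
have lamw : lam w = 0 := lamSw _ (ext_self w hS).
(* [lam] vanishes on S + K w and [lam y = 1], so the shear fixes S and sends y to u *)
have <- : shear lam w @` Y = Z.
  rewrite eY shear_ext_image // => [|s hs]; first by rewrite addrC subrK.
  exact/lamSw/ext_subl.
apply: (iso_quot_image (psi := shear lam (- w))) qY; first exact: shearK.
by rewrite -{2}(opprK w); apply: shearK; rewrite linearN lamw oppr0.
Qed.

Definition spans2 p q := forall z, exists a b, z = a *: p + b *: q.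

Lemma spans2_exchange p q u : spans2 p q -> u <> 0 -> exists r, spans2 u r.
Proof.
move=> spq u0; have [a [b eu]] := spq u.
have [a0|a0] := eqVneq a 0.
  have b0 : b != 0 by apply: contra_notN u0 => /eqP b0; rewrite eu a0 b0 !scale0r addr0.
  exists p => z; have [c [d ->]] := spq z; exists (d * b^-1), c.
  by rewrite eu a0 scale0r add0r scalerA -mulrA (mulVr (HK b0)) mulr1 addrC.
exists q => z; have [c [d ->]] := spq z; exists (c * a^-1), (d - c * a^-1 * b).
rewrite eu scalerDr !scalerA -mulrA (mulVr (HK a0)) mulr1 scalerBl -addrA.
by congr (_ + _); rewrite addrCA subrr addr0.
Qed.

Lemma spans2_not_dim_gt2 p q : spans2 p q -> ~ dim_gt2 V.
Proof.
have one0 : (1 : K) <> 0 by move/eqP; rewrite oner_eq0.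
have mone0 : (-1 : K) <> 0 by move/eqP; rewrite oppr_eq0 oner_eq0.
move=> spq [u [v [w ind]]].
have u0 : u <> 0.
  move=> u0; apply: one0; apply: (proj1 (ind 1 0 0 _)).
  by rewrite u0 scaler0 !scale0r !addr0.
have [r sur] := spans2_exchange spq u0.
have [c [d ev]] := sur v; have [e [g ew]] := sur w.
have d0 : d != 0.
  apply/eqP => d0; apply: mone0; apply: (proj1 (proj2 (ind c (-1) 0 _))).
  by rewrite ev d0 scale0r addr0 scaleN1r scale0r addr0 subrr.
apply: mone0; apply: (proj2 (proj2 (ind (e - g * d^-1 * c) (g * d^-1) (-1) _))).
rewrite scaleN1r ev ew scalerDr !scalerA -(mulrA g _ d) (mulVr (HK d0)) mulr1 scalerBl.
by rewrite addrA subrK subrr.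
Qed.

Lemma Gset_codim1_not_full X N : dim_gt2 V -> Gset X -> codim1 X N ->
  exists u, ~ N u.
Proof.
move=> hd [hX [f [rf kf]]] [_ [v [_ [_ eN]]]]; apply/existsNP => Nall.
apply: (spans2_not_dim_gt2 (p := f v) (q := v)) hd => z.
have /extP[y [a [Xy ->]]] : ssum X (line v) z by rewrite -eN.
move: Xy; rewrite -rf => -[t _ <-].
have /extP[x [b [Xx ->]]] : ssum X (line v) t by rewrite -eN.
move: Xx; rewrite -kf => /= fx0.
by exists b, a; rewrite linearD linearZ fx0 add0r.
Qed.

Lemma Gset_codim1_sub_nonzero M X : dim_gt2 V -> Gset X -> codim1 M X ->
  exists m, M m /\ m <> 0.
Proof.
move=> hd [hX [f [rf kf]]] [_ [x [Xx [_ eX]]]]; apply: contrapT => nM.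
have M0 m : M m -> m = 0 by move=> Mm; apply: contrapT => m0; apply: nM; exists m.
move: (Xx); rewrite -rf => -[s _ fs].
apply: (spans2_not_dim_gt2 (p := x) (q := s)) hd => z.
have /extP[m [a [Mm fz]]] : ssum M (line x) (f z) by rewrite -eX -rf; exists z.
have : X (z - a *: s) by rewrite -kf /= linearB linearZ fs fz (M0 _ Mm) add0r subrr.
rewrite eX => /extP[m' [b [Mm' ezs]]].
by exists b, a; rewrite -(subrK (a *: s) z) ezs (M0 _ Mm') add0r.
Qed.

Lemma exists_hyperplane_avoiding N m : is_subspace N -> N m -> m <> 0 ->
  exists Z, [/\ is_subspace Z, codim1 Z N & ~ Z m].
Proof.
move=> hN Nm m0; have nl0m : ~ line 0 m by move=> [a]; rewrite scaler0.
have [lam [_ lamm]] := exists_linear_form (line_subspace 0) nl0m.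
have hker : is_subspace [set z | lam z = 0].
  split; first exact: linear0.
  split=> [x y /= lx ly|a x /= lx]; first by rewrite linearD lx ly addr0.
  by rewrite linear_formZ lx mulr0.
have nZm : ~ (N `&` [set z | lam z = 0]) m.
  by move=> [_ /=]; rewrite lamm; apply/eqP; apply: oner_neq0.
exists (N `&` [set z | lam z = 0]); split=> //; first exact: setI_subspace.
split; first exact: subIsetl.
exists m; split=> //; split=> //; apply/seteqP; split; last first.
  by apply: (ext_least hN _ Nm); apply: subIsetl.
move=> z Nz; apply/extP; exists (z - lam z *: m), (lam z); split; last by rewrite subrK.
split; first exact: (subspaceB hN Nz (subspaceZ _ hN Nm)).
by rewrite /= linearB linear_formZ lamm mulr1 subrr.
Qed.

Section Pencil.
Variables M X N : set V.
Hypotheses (hM : is_subspace M) (GX : Gset X) (cMX : codim1 M X) (cXN : codim1 X N).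

Lemma star_top_base : star M X /\ top N X. Proof. by split; split. Qed.

Lemma pencil_second_point : exists Y, [/\ Y <> X, star M Y & top N Y].
Proof.
have hX : is_subspace X := GX.1.
have [_ [v [Nv [nXv eN]]]] := cXN; have nMv : ~ M v by move/(codim1_subset cMX).
have cMY := codim1_ext hM nMv; set Y := ssum M (line v) in cMY *.
have nYX : Y <> X by move=> eY; apply: nXv; rewrite -eY; apply: ext_self.
have hY := codim1_subspace hM cMY; have GY := Gset_common_hyperplane GX hM cMX cMY.
exists Y; split=> //; split=> //.
have [cY _] := codim1_common_sub hM cMY cMX nYX.
have sYXN : ssum Y X `<=` N.
  apply: (ssum_least (codim1_subspace hX cXN) _ (codim1_subset cXN)).
  apply: (ext_least (codim1_subspace hX cXN) _ Nv) => m.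
  by move=> /(codim1_subset cMX) /(codim1_subset cXN).
have [eYX|<-] // := codim1_between hX (ssum_subspace hY hX) cXN (ssum_subr hY) sYXN.
by case: nXv; rewrite -eYX; apply: (ssum_subl hX); apply: ext_self.
Qed.

Lemma clique_through_pencil D Y : is_clique D -> D X -> D Y -> Y <> X ->
  star M Y -> top N Y -> D `<=` star M \/ D `<=` top N.
Proof.
move=> cD DX DY nYX [_ cMY] [[hY _] cYN]; have hX : is_subspace X := GX.1.
have [_ <-] := codim1_common_sub hM cMX cMY (nesym nYX).
have [_ <-] := codim1_common_sup hX hY cXN cYN (nesym nYX).
exact: clique_sub_star_or_top cD DX DY (nesym nYX).
Qed.

Hypothesis HdimV : dim_gt2 V.

Lemma star_not_sub_top : ~ star M `<=` top N.
Proof.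
have [u nNu] := Gset_codim1_not_full HdimV GX cXN.
have nMu : ~ M u by move/(codim1_subset cMX)/(codim1_subset cXN).
have cMZ := codim1_ext hM nMu; have GZ := Gset_common_hyperplane GX hM cMX cMZ.
move=> /(_ _ (conj GZ cMZ)) [_ /codim1_subset sZN].
by apply: nNu; apply: sZN; apply: ext_self.
Qed.

Lemma top_not_sub_star : ~ top N `<=` star M.
Proof.
have hX : is_subspace X := GX.1.
have [m [Mm m0]] := Gset_codim1_sub_nonzero HdimV GX cMX.
have Xm := codim1_subset cMX Mm.
have [Z [hZ cZN nZm]] := exists_hyperplane_avoiding (codim1_subspace hX cXN)
  (codim1_subset cXN Xm) m0.
have nXZ : X <> Z by move=> eXZ; apply: nZm; rewrite -eXZ.
have [cXZX _] := codim1_common_sup hX hZ cXN cZN nXZ.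
have [cZXZ _] := codim1_common_sup hZ hX cZN cXN (nesym nXZ).
rewrite setIC in cZXZ.
have GZ := Gset_common_hyperplane GX (setI_subspace hX hZ) cXZX cZXZ.
by move=> /(_ _ (conj GZ cZN)) [_ /codim1_subset /(_ m Mm)].
Qed.

Lemma star_max_clique : is_max_clique (star M).
Proof.
have [Y [nYX sY tY]] := pencil_second_point; have [sX _] := star_top_base.
split=> [|D cD sD]; first exact: star_clique.
have [sDM|sDN] := clique_through_pencil cD (sD _ sX) (sD _ sY) nYX sY tY.
  by apply/seteqP.
by case: star_not_sub_top; apply: subset_trans sD sDN.
Qed.

Lemma top_max_clique : is_max_clique (top N).
Proof.
have [Y [nYX sY tY]] := pencil_second_point; have [_ tX] := star_top_base.
split=> [|D cD sD]; first exact: top_clique.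
have [sDM|sDN] := clique_through_pencil cD (sD _ tX) (sD _ tY) nYX sY tY; last first.
  by apply/seteqP.
by case: top_not_sub_star; apply: subset_trans sD sDM.
Qed.

End Pencil.

Lemma pencil_max_cliques P : dim_gt2 V -> is_pencil P ->
  P `<=` Gset (V:=V) /\ (exists X Y, P X /\ P Y /\ X <> Y) /\
  exists C1 C2 : set (set V), is_max_clique C1 /\ is_max_clique C2 /\
    C1 <> C2 /\ P = C1 `&` C2.
Proof.
move=> hd [M [N [hM [_ [[X [GX [cMX cXN]]] ->]]]]].
rewrite (pencil_ofE hM cMX cXN).
have [Y [nYX sY tY]] := pencil_second_point hM GX cMX cXN.
split; first by move=> Z [[]].
split; first by exists X, Y; do !split=> //; apply: nesym.
exists (star M), (top N); split; [|split; [|split=> //]].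
- exact: (star_max_clique hM GX cMX cXN hd).
- exact: (top_max_clique hM GX cMX cXN hd).
- by move=> eMN; apply: (star_not_sub_top hM GX cMX cXN hd); rewrite eMN.
Qed.

Lemma max_cliques_pencil P : P `<=` Gset (V:=V) ->
  (exists X Y, P X /\ P Y /\ X <> Y) ->
  (exists C1 C2 : set (set V), is_max_clique C1 /\ is_max_clique C2 /\
    C1 <> C2 /\ P = C1 `&` C2) -> is_pencil P.
Proof.
move=> PG [X [Y [PX [PY nXY]]]] [C1 [C2 [mC1 [mC2 [nC12 eP]]]]]; subst P.
have [[hX _] [hY _]] := (PG _ PX, PG _ PY).
have [C1X C2X] : C1 X /\ C2 X := PX; have [C1Y C2Y] : C1 Y /\ C2 Y := PY.
have aXY : adjacent X Y := mC1.1.2 _ _ C1X C1Y nXY.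
have [cMX _] := adjacent_meet hX hY aXY.
exists (X `&` Y), (ssum X Y); split; first exact: setI_subspace.
split; first exact: ssum_subspace.
split; first by exists X; split; [exact: PG|split; [exact: cMX|exact: aXY.1]].
rewrite (pencil_ofE (setI_subspace hX hY) cMX aXY.1).
case: (max_clique_star_or_top mC1 C1X C1Y nXY) => -> in nC12 *;
  case: (max_clique_star_or_top mC2 C2X C2Y nXY) => -> in nC12 *.
- by case: nC12.
- by [].
- exact: setIC.
- by case: nC12.
Qed.

End Grassmann.

Theorem theorem2p5 (K : unitRingType) (V : lmodType K)
  (HK : is_division_ring K) (HdimV : dim_gt2 V)
  (HG : exists X : set V, Gset X) (P : set (set V)) :
  is_pencil P <->
  (P `<=` Gset (V:=V) /\ (exists X Y, P X /\ P Y /\ X <> Y) /\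
   exists C1 C2 : set (set V), is_max_clique C1 /\ is_max_clique C2 /\
     C1 <> C2 /\ P = C1 `&` C2).
Proof.
split=> [|[PG [PXY PC]]]; first exact: pencil_max_cliques.
exact: max_cliques_pencil.
Qed.
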